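(* Let $0\le c<1$ and $0\le\delta\le q$ with $q>0$, and let $\mathbf A(\mu)=\begin{bmatrix}0&1-\delta\mu\\-c&1+c-q\mu\end{bmatrix}$. For any $k\ge1$ and any $\mu_1,\dots,\mu_k\in\big[0,\frac{(1-c)^2}{q-c\delta}\big]$, $$\Big\|\prod_{i=1}^k\mathbf A(\mu_i)\begin{bmatrix}1\\1\end{bmatrix}\Big\|\le2.$$
   Context: $\|\cdot\|$ denotes the Euclidean norm of a vector in $\mathbb R^2$; the product is an ordered matrix product. *)

From HB Require Import structures.
From mathcomp Require Import all_boot all_order all_algebra.
Set Implicit Arguments. Unset Strict Implicit. Unset Printing Implicit Defensive.
Import Order.TTheory GRing.Theory Num.Theory.
Local Open Scope ring_scope.

Definition Amat (R : nzRingType) (c delta q mu : R) : 'M[R]_2 :=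
  \matrix_(i < 2, j < 2)
    if (i == 0 :> nat) then (if (j == 0 :> nat) then 0 else 1 - delta * mu)
    else (if (j == 0 :> nat) then - c else 1 + c - q * mu).

Definition ones2 (R : nzRingType) : 'cV[R]_2 := \col_(i < 2) 1.

Definition enorm (R : rcfType) (n : nat) (v : 'cV[R]_n) : R :=
  Num.sqrt (\sum_(i < n) v i 0 ^+ 2).

(* The quadratic form F(x, y) = (y - c x)^2 + (x - y)^2 does not increase
   under any admissible A(mu).  In the coordinates u = y - c x, w = x - y,
   A(mu) acts by (u, w) |-> ((1 - t) u - t c w, r u + c (1 + r) w), where
   t = (q - c delta) mu / (1 - c) and r = (q - delta) mu / (1 - c); the bound
   on mu says exactly that (t, r) lies in the triangle 0 <= r <= t <= 1 - c.
   This matrix is affine in (t, r) and the squared Euclidean norm is convex,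
   so it suffices to see that the matrices at the three vertices of the
   triangle are contractions.  Since F(1, 1) = (1 - c)^2, every product
   applied to (1, 1) keeps F <= (1 - c)^2, and as (1 - c) x = u + w and
   (1 - c) y = u + c w, this forces x^2 + y^2 <= 4. *)
From HB Require Import structures.
From mathcomp Require Import all_boot all_order all_algebra.
From mathcomp Require Import ring lra.
Import Order.TTheory GRing.Theory Num.Theory.
Set Implicit Arguments. Unset Strict Implicit.
Local Open Scope ring_scope.

Section ConvexContraction.

Variable R : realDomainType.

Lemma sqr_wsum3_le (W0 W1 W2 a0 a1 a2 : R) :
  0 <= W0 -> 0 <= W1 -> 0 <= W2 ->
  (W0 * a0 + W1 * a1 + W2 * a2) ^+ 2
    <= (W0 + W1 + W2) * (W0 * a0 ^+ 2 + W1 * a1 ^+ 2 + W2 * a2 ^+ 2).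
Proof.
move=> W0ge0 W1ge0 W2ge0; rewrite -subr_ge0.
have -> : (W0 + W1 + W2) * (W0 * a0 ^+ 2 + W1 * a1 ^+ 2 + W2 * a2 ^+ 2)
          - (W0 * a0 + W1 * a1 + W2 * a2) ^+ 2
  = W0 * W1 * (a0 - a1) ^+ 2 + W0 * W2 * (a0 - a2) ^+ 2
    + W1 * W2 * (a1 - a2) ^+ 2 by ring.
by apply: addr_ge0; [apply: addr_ge0|]; apply: mulr_ge0;
  rewrite ?sqr_ge0 ?mulr_ge0.
Qed.

Lemma sqrn2_wsum3_le (W0 W1 W2 x0 x1 x2 y0 y1 y2 N : R) :
  0 <= W0 -> 0 <= W1 -> 0 <= W2 ->
  x0 ^+ 2 + y0 ^+ 2 <= N -> x1 ^+ 2 + y1 ^+ 2 <= N -> x2 ^+ 2 + y2 ^+ 2 <= N ->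
  (W0 * x0 + W1 * x1 + W2 * x2) ^+ 2 + (W0 * y0 + W1 * y1 + W2 * y2) ^+ 2
    <= (W0 + W1 + W2) ^+ 2 * N.
Proof.
move=> W0ge0 W1ge0 W2ge0 N0 N1 N2.
have Wge0 : 0 <= W0 + W1 + W2 by lra.
apply: le_trans (lerD (sqr_wsum3_le x0 x1 x2 W0ge0 W1ge0 W2ge0)
                      (sqr_wsum3_le y0 y1 y2 W0ge0 W1ge0 W2ge0)) _.
rewrite -mulrDr expr2 -mulrA ler_wpM2l //.
have -> : W0 * x0 ^+ 2 + W1 * x1 ^+ 2 + W2 * x2 ^+ 2
          + (W0 * y0 ^+ 2 + W1 * y1 ^+ 2 + W2 * y2 ^+ 2)
  = W0 * (x0 ^+ 2 + y0 ^+ 2) + W1 * (x1 ^+ 2 + y1 ^+ 2)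
    + W2 * (x2 ^+ 2 + y2 ^+ 2) by ring.
by rewrite !mulrDl !lerD // ler_wpM2l.
Qed.

Lemma contraction_vertex00 (c u w : R) : 0 <= c -> c < 1 ->
  u ^+ 2 + (c * w) ^+ 2 <= u ^+ 2 + w ^+ 2.
Proof.
move=> c_ge0 c_lt1.
by rewrite lerD2l exprMn ler_piMl ?sqr_ge0 // expr_le1 // ltW.
Qed.

Lemma contraction_vertex10 (c u w : R) : 0 <= c -> c < 1 ->
  (c * u - c * (1 - c) * w) ^+ 2 + (c * w) ^+ 2 <= u ^+ 2 + w ^+ 2.
Proof.
move=> c_ge0 c_lt1; have cp1_gt0 : 0 < 1 + c by lra.
rewrite -subr_ge0 -(pmulr_rge0 _ cp1_gt0).
have -> : (1 + c) * (u ^+ 2 + w ^+ 2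
                     - ((c * u - c * (1 - c) * w) ^+ 2 + (c * w) ^+ 2))
  = (1 - c) * ((1 + c) * u + c ^+ 2 * w) ^+ 2
    + (1 - c) * (1 + 2 * c) * w ^+ 2 by ring.
by apply: addr_ge0; apply: mulr_ge0; rewrite ?sqr_ge0 //; nra.
Qed.

Lemma contraction_vertex11 (c u w : R) : 0 <= c -> c < 1 ->
  (c * u - c * (1 - c) * w) ^+ 2 + ((1 - c) * u + c * (2 - c) * w) ^+ 2
    <= u ^+ 2 + w ^+ 2.
Proof.
move=> c_ge0 c_lt1; rewrite -subr_ge0.
have -> : u ^+ 2 + w ^+ 2 - ((c * u - c * (1 - c) * w) ^+ 2
                             + ((1 - c) * u + c * (2 - c) * w) ^+ 2)
  = 2 * c * (1 - c) * (u - (1 - c) * w) ^+ 2 + (1 - c) ^+ 2 * w ^+ 2 by ring.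
by apply: addr_ge0; apply: mulr_ge0; rewrite ?sqr_ge0 //; nra.
Qed.

Lemma contraction_triangle (c u w t r : R) : 0 <= c -> c < 1 ->
  0 <= r -> r <= t -> t <= 1 - c ->
  ((1 - t) * u - t * c * w) ^+ 2 + (r * u + c * (1 + r) * w) ^+ 2
    <= u ^+ 2 + w ^+ 2.
Proof.
move=> c_ge0 c_lt1 r_ge0 r_le_t t_le.
have W0ge0 : 0 <= 1 - c - t by lra.
have W1ge0 : 0 <= t - r by lra.
have := sqrn2_wsum3_le W0ge0 W1ge0 r_ge0
  (contraction_vertex00 u w c_ge0 c_lt1)
  (contraction_vertex10 u w c_ge0 c_lt1) (contraction_vertex11 u w c_ge0 c_lt1).
(* barycentric coordinates of (t, r) in the triangle, scaled by 1 - c *)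
have -> : 1 - c - t + (t - r) + r = 1 - c by ring.
have -> : (1 - c - t) * u + (t - r) * (c * u - c * (1 - c) * w)
          + r * (c * u - c * (1 - c) * w)
  = (1 - c) * ((1 - t) * u - t * c * w) by ring.
have -> : (1 - c - t) * (c * w) + (t - r) * (c * w)
          + r * ((1 - c) * u + c * (2 - c) * w)
  = (1 - c) * (r * u + c * (1 + r) * w) by ring.
by rewrite !exprMn -mulrDr ler_pM2l // exprn_gt0 // subr_gt0.
Qed.

End ConvexContraction.

Lemma Amat_mulmx_row0 (R : nzRingType) (c delta q mu : R) (v : 'cV[R]_2) :
  (Amat c delta q mu *m v) 0 0 = (1 - delta * mu) * v 1 0.
Proof.
rewrite !mxE big_ord_recr big_ord1 /= !mxE /= mul0r add0r.
by congr (_ * v _ _); apply: val_inj.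
Qed.

Lemma Amat_mulmx_row1 (R : nzRingType) (c delta q mu : R) (v : 'cV[R]_2) :
  (Amat c delta q mu *m v) 1 0 = - c * v 0 0 + (1 + c - q * mu) * v 1 0.
Proof.
rewrite !mxE big_ord_recr big_ord1 /= !mxE /=.
by congr (_ * v _ _ + _ * v _ _); apply: val_inj.
Qed.

Definition lyap (R : nzRingType) (c : R) (v : 'cV[R]_2) : R :=
  (v 1 0 - c * v 0 0) ^+ 2 + (v 0 0 - v 1 0) ^+ 2.

Lemma lyap_ones2 (R : nzRingType) (c : R) : lyap c (ones2 R) = (1 - c) ^+ 2.
Proof. by rewrite /lyap !mxE mulr1 subrr expr0n addr0. Qed.

Lemma lyap_Amat_le (R : realFieldType) (c delta q mu : R) (v : 'cV[R]_2) :
  0 <= c -> c < 1 -> 0 <= delta -> delta <= q ->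
  0 <= mu <= (1 - c) ^+ 2 / (q - c * delta) ->
  lyap c (Amat c delta q mu *m v) <= lyap c v.
Proof.
move=> c_ge0 c_lt1 delta_ge0 delta_le_q /andP[mu_ge0 mu_le].
rewrite /lyap Amat_mulmx_row0 Amat_mulmx_row1.
set x := v 0 0; set y := v 1 0.
have c1_gt0 : 0 < 1 - c by lra.
have c1_neq0 : 1 - c != 0 by rewrite gt_eqF.
set t := (q - c * delta) * mu / (1 - c).
set r := (q - delta) * mu / (1 - c).
have -> : - c * x + (1 + c - q * mu) * y - c * ((1 - delta * mu) * y)
  = (1 - t) * (y - c * x) - t * c * (x - y) by rewrite /t; field.
have -> : (1 - delta * mu) * y - (- c * x + (1 + c - q * mu) * y)
  = r * (y - c * x) + c * (1 + r) * (x - y) by rewrite /r; field.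
apply: contraction_triangle => //.
- by rewrite /r divr_ge0 ?mulr_ge0 //; lra.
- by rewrite /r /t ler_pM2r ?invr_gt0 // ler_wpM2r //; nra.
rewrite /t ler_pdivrMr // -expr2.
have [<-|qcd_neq0] := eqVneq 0 (q - c * delta); first by rewrite mul0r sqr_ge0.
have qcd_gt0 : 0 < q - c * delta by rewrite lt_def eq_sym qcd_neq0 /=; nra.
by rewrite mulrC -ler_pdivlMr.
Qed.

Lemma lyap_prod_Amat_le (R : realFieldType) (c delta q : R) (n : nat)
    (mu : 'I_n -> R) (v : 'cV[R]_2) :
  0 <= c -> c < 1 -> 0 <= delta -> delta <= q ->
  (forall i, 0 <= mu i <= (1 - c) ^+ 2 / (q - c * delta)) ->
  lyap c ((\prod_(i < n) Amat c delta q (mu i)) *m v) <= lyap c v.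
Proof.
move=> c_ge0 c_lt1 delta_ge0 delta_le_q.
elim: n mu => [|n IHn] mu mu_bound; first by rewrite big_ord0 mul1mx.
rewrite big_ord_recl -mulmxE -mulmxA.
apply: le_trans (IHn _ (fun i => mu_bound (lift ord0 i))).
exact: lyap_Amat_le.
Qed.

Lemma sqrn2_le4_of_lyap (R : realFieldType) (c x y : R) : -1 <= c -> c < 1 ->
  (y - c * x) ^+ 2 + (x - y) ^+ 2 <= (1 - c) ^+ 2 -> x ^+ 2 + y ^+ 2 <= 4.
Proof.
move=> c_ge_N1 c_lt1 lyap_le.
have c1_gt0 : 0 < (1 - c) ^+ 2 by rewrite exprn_gt0 // subr_gt0.
(* (1 - c) x = u + w and (1 - c) y = u + c w, with u = y - c x, w = x - y *)
have key : (1 - c) ^+ 2 * (x ^+ 2 + y ^+ 2)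
           <= 4 * ((y - c * x) ^+ 2 + (x - y) ^+ 2).
  rewrite -subr_ge0.
  have -> : 4 * ((y - c * x) ^+ 2 + (x - y) ^+ 2)
            - (1 - c) ^+ 2 * (x ^+ 2 + y ^+ 2)
    = (y - c * x - (x - y)) ^+ 2 + (c * (y - c * x) - (x - y)) ^+ 2
      + (1 - c ^+ 2) * ((y - c * x) ^+ 2 + (x - y) ^+ 2) by ring.
  apply: addr_ge0; first by apply: addr_ge0; apply: sqr_ge0.
  have c2_le1 : 0 <= 1 - c ^+ 2.
    rewrite (_ : 1 - c ^+ 2 = (1 - c) * (1 + c)); last by ring.
    by apply: mulr_ge0; lra.
  by apply: mulr_ge0 => //; apply: addr_ge0; apply: sqr_ge0.
rewrite -(ler_pM2l c1_gt0); apply: le_trans key _.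
by rewrite mulrC ler_wpM2r.
Qed.

Lemma enorm_cV2 (R : rcfType) (v : 'cV[R]_2) :
  enorm v = Num.sqrt (v 0 0 ^+ 2 + v 1 0 ^+ 2).
Proof.
rewrite /enorm big_ord_recr big_ord1 /=.
by congr (Num.sqrt (v _ 0 ^+ 2 + v _ 0 ^+ 2)); apply: val_inj.
Qed.

Theorem mainTheorem11 (R : rcfType) (c delta q : R) (k : nat) (mu : 'I_k -> R) :
  0 <= c -> c < 1 -> 0 < q -> 0 <= delta -> delta <= q ->
  (1 <= k)%N ->
  (forall i, 0 <= mu i <= (1 - c) ^+ 2 / (q - c * delta)) ->
  enorm ((\prod_(i < k) Amat c delta q (mu i)) *m ones2 R) <= 2.
Proof.
move=> c_ge0 c_lt1 _ delta_ge0 delta_le_q _ mu_bound.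
have := lyap_prod_Amat_le (ones2 R) c_ge0 c_lt1 delta_ge0 delta_le_q mu_bound.
rewrite lyap_ones2 enorm_cV2 => lyap_le.
have c_ge_N1 : -1 <= c by lra.
have sqrn_le4 := sqrn2_le4_of_lyap c_ge_N1 c_lt1 lyap_le.
rewrite -(@ger0_norm _ 2) // -sqrtr_sqr ler_sqrt ?sqr_ge0 //.
by rewrite (_ : 2 ^+ 2 = 4) //; ring.
Qed.
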